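(* Let $n\ge1$, $U_n$ the family of bounded subsets of $\mathbb R^n$, and $\mu:U_n\to B_2$ a measure. (a) If $\mu$ is derivable on the topological closure $\overline A$ of a set $A\in U_n$, then: (a.1) the set $\mathrm{supp}_A\,d\mu=\{x\in A:d\mu(x)=1\}$ is finite; (a.2) for every $x\in A$ there exists $\varepsilon>0$ such that for every $B\in U_n$ with $x\in B$ and $d(B)<\varepsilon$ one has $\mu(B-\{x\})=0$; (a.3) $\mu(A)=\sum_{x\in A}\mu(\{x\})$; (a.4) for every partition $\{A_i\}_{i\in I}$ of $A$ into subsets $A_i\subset A$, $\mu(A)=\sum_{i\in I}\mu(A_i)$. (b) If $\mu$ is derivable (on every set of $U_n$), then the set $\mathrm{supp}\,d\mu=\{x\in\mathbb R^n:d\mu(x)=1\}$ is locally finite.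
   Context: $B_2=\{0,1\}$. $\mu$ is a measure if for every sequence of pairwise disjoint sets of $U_n$ whose union is in $U_n$, only finitely many have $\mu$-value 1 and $\mu$ of the union is their number modulo 2. $d(B)=\sup_{x,y\in B}\|x-y\|$. $\mu$ is derivable at $x$ if there exist $\varepsilon>0$, $a\in B_2$ with $\mu(B)=a$ for all $B\in U_n$ containing $x$ with $d(B)<\varepsilon$; then $d\mu(x)=a$. Derivable on a set means derivable at each of its points. A sum $\sum_{j\in J}a_j$ of elements of $B_2$ indexed by an arbitrary set is defined when only finitely many $a_j$ equal 1, and then equals that number modulo 2. $H\subset\mathbb R^n$ is locally finite if $A\cap H$ is finite for every bounded $A$. *)

From HB Require Import structures.
From mathcomp Require Import all_boot all_order all_algebra.
From mathcomp Require Import all_classical all_reals all_analysis.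
Set Implicit Arguments. Unset Strict Implicit. Unset Printing Implicit Defensive.
Import Order.TTheory GRing.Theory Num.Theory numFieldNormedType.Exports.
Local Open Scope classical_set_scope.
Local Open Scope ring_scope.

Section B2Defs.
Variables (R : realType) (n : nat).
Local Notation V := 'rV[R]_n.

Definition eucl_norm (x : V) : R := Num.sqrt (\sum_(i < n) x ord0 i ^+ 2).

Definition in_Un (A : set V) : Prop :=
  exists M : R, forall x, A x -> eucl_norm x <= M.

Definition diam (B : set V) : R :=
  sup [set r | exists x y, B x /\ B y /\ r = eucl_norm (x - y)].

(* sum in B_2 = {0,1} (bool, 1 = true) over an arbitrary index set J:
   b2sum_eq J a s  means the sum is defined (finitely many a_j = 1)
   and equals s (that number modulo 2). *)
Definition b2sum_eq {I : Type} (J : set I) (a : I -> bool) (s : bool) : Prop :=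
  exists k : nat, card_eq [set j | J j /\ a j = true] `I_k /\ s = odd k.

Definition is_B2measure (mu : set V -> bool) : Prop :=
  forall F : nat -> set V,
    (forall i, in_Un (F i)) ->
    (forall i j, i <> j -> F i `&` F j = set0) ->
    in_Un (\bigcup_i F i) ->
    b2sum_eq setT (fun i => mu (F i)) (mu (\bigcup_i F i)).

Definition dmu_is (mu : set V -> bool) (x : V) (a : bool) : Prop :=
  exists2 eps : R, 0 < eps &
    forall B, in_Un B -> B x -> diam B < eps -> mu B = a.

Definition derivable_at (mu : set V -> bool) (x : V) : Prop :=
  exists a, dmu_is mu x a.

Definition derivable_on (mu : set V -> bool) (A : set V) : Prop :=
  forall x, A x -> derivable_at mu x.

Definition supp_dmu (mu : set V -> bool) (A : set V) : set V :=
  [set x | A x /\ dmu_is mu x true].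

Definition locally_finite (H : set V) : Prop :=
  forall A, in_Un A -> finite_set (A `&` H).

Definition is_partition {I : Type} (F : I -> set V) (A : set V) : Prop :=
  [/\ forall i, F i !=set0,
      forall i j, i <> j -> F i `&` F j = set0 &
      \bigcup_i F i = A].

End B2Defs.

From HB Require Import structures.
From mathcomp Require Import all_boot all_order all_algebra.
From mathcomp Require Import all_classical all_reals all_analysis.
From mathcomp Require Import finmap.
From mathcomp Require Import ring lra.
Set Implicit Arguments. Unset Strict Implicit. Unset Printing Implicit Defensive.
Import Order.TTheory GRing.Theory Num.Theory numFieldNormedType.Exports.
Local Open Scope classical_set_scope.
Local Open Scope ring_scope.

(* Derivability at x yields a ball around x in which mu only sees x: if a
   bounded C lies in it, then C `|` [set x] still has small diameter, so
   mu (C `|` [set x]) = d mu (x) = mu [set x]; additivity then gives (a.2)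
   and mu C = mu (C `&` [set x]).  Covering the compact closure of A by
   finitely many such balls, every subset C of A is "atomic": only finitely
   many y in C have mu [set y] = 1, and mu C is their number modulo 2.  This
   is (a.1) and (a.3); (a.4) follows by counting atoms block by block, and (b)
   is (a.1) for bounded sets, whose closures are again bounded. *)

Lemma finite_set_ind {T : Type} (P : set T -> Prop) :
  P set0 -> (forall x A, finite_set A -> ~ A x -> P A -> P (x |` A)) ->
  forall A, finite_set A -> P A.
Proof.
move=> P0 PU1 A /(@finite_seqP {classic T}) [s ->]; elim: s => [|x s IH].
  by rewrite (_ : [set` _] = set0) //; apply/seteqP; split.
have -> : [set` x :: s] = x |` [set` s] :> set {classic T}.
  apply/seteqP; split => y /=; rewrite inE.
    by case/orP => [/eqP->|ys]; [left|right].
  by case=> [->|->]; rewrite ?eqxx ?orbT.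
have [xs|xs] := boolP (x \in s).
  by rewrite (setUidr (_ : [set x] `<=` [set` s])) // => y ->.
apply: PU1 => //; [exact: (@finite_seq {classic T}) | exact/negP].
Qed.

(* [fset_set S] is empty when [S] is infinite, hence [parity S = false] then. *)
Definition parity {T : Type} (S : set T) : bool :=
  odd #|` @fset_set {classic T} S|%fset.

Lemma parity_set0 {T : Type} : parity (@set0 T) = false.
Proof. by rewrite /parity fset_set0 cardfs0. Qed.

Lemma parity_set1 {T : Type} (x : T) : parity [set x] = true.
Proof. by rewrite /parity (@fset_set1 {classic T}) cardfs1. Qed.

Lemma parityU {T : Type} (A B : set T) : finite_set A -> finite_set B ->
  A `&` B = set0 -> parity (A `|` B) = parity A (+) parity B.
Proof.
move=> fA fB AB; rewrite /parity (@fset_setU {classic T}) //.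
have := cardfsUI (@fset_set {classic T} A) (@fset_set {classic T} B).
by rewrite -(@fset_setI {classic T}) // AB fset_set0 cardfs0 addn0 => ->; rewrite oddD.
Qed.

Lemma parityU1 {T : Type} (x : T) (A : set T) : finite_set A -> ~ A x ->
  parity (x |` A) = ~~ parity A.
Proof.
move=> fA Ax; rewrite parityU ?parity_set1 //.
by apply/seteqP; split => // y [-> /Ax].
Qed.

Lemma b2sum_eqP {I : Type} (J : set I) (a : I -> bool) (s : bool) :
  b2sum_eq J a s <->
  finite_set [set j | J j /\ a j = true] /\ s = parity [set j | J j /\ a j = true].
Proof.
rewrite /parity; split => [[k [hk ->]]|[[k hk] ->]].
  by split; [exists k | rewrite (@card_fset_set {classic I} _ k)].
by exists k; rewrite (@card_fset_set {classic I} _ k).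
Qed.

Lemma b2sum_eq_unique {I : Type} (J : set I) (a : I -> bool) (s t : bool) :
  b2sum_eq J a s -> b2sum_eq J a t -> s = t.
Proof. by move=> /b2sum_eqP[_ ->] /b2sum_eqP[_ ->]. Qed.

Lemma b2sum_eq0 {I : Type} (J : set I) : b2sum_eq J (fun=> false) false.
Proof.
apply/b2sum_eqP; rewrite (_ : [set j | _] = set0) ?parity_set0 //.
by apply/seteqP; split => // j [].
Qed.

Lemma b2sum_eq_toggle {I : Type} {a : I -> bool} {s : bool} (b : bool) (j : I) :
  b2sum_eq setT a s ->
  b2sum_eq setT (fun i => a i (+) (b && `[< i = j >])) (s (+) b).
Proof.
case: b; last by rewrite addbF; under eq_fun do rewrite andFb addbF.
move=> /b2sum_eqP [finS ->]; apply/b2sum_eqP.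
set S := [set i | _ /\ a i = true] in finS *.
have [aj|aj] := boolP (a j).
- have E : [set i | setT i /\ a i (+) (true && `[< i = j >]) = true] = S `\ j.
    apply/seteqP; split => i /=; case: (pselect (i = j)) => [->|ij].
    + by rewrite aj asboolT // => -[].
    + by rewrite (asboolF ij) addbF => -[_ ai].
    + by case=> _ [].
    + by rewrite (asboolF ij) addbF => -[[_ ai] _].
  rewrite E; split; first exact: finite_setD.
  have Sj : S j by [].
  rewrite -{1}(setD1K Sj) parityU1 ?addbT ?negbK //; first exact: finite_setD.
  by case=> _ /(_ erefl).
- have E : [set i | setT i /\ a i (+) (true && `[< i = j >]) = true] = j |` S.
    apply/seteqP; split => i /=; case: (pselect (i = j)) => [->|ij].
    + by left.
    + by rewrite (asboolF ij) addbF => -[_ ai]; right.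
    + by rewrite (negbTE aj) asboolT.
    + by rewrite (asboolF ij) addbF => -[//|[_ ->]].
  rewrite E parityU1 ?addbT //; last by case=> _; apply/negP.
  by rewrite finite_setU; split => //; exact: finite_set1.
Qed.

Lemma b2sum_eq_parity_partition {I T : Type} (F : I -> set T) (X : set T) :
  (forall i j, i <> j -> F i `&` F j = set0) ->
  finite_set X -> X `<=` \bigcup_i F i ->
  b2sum_eq setT (fun i => parity (X `&` F i)) (parity X).
Proof.
move=> disjF; move: X; apply: finite_set_ind => [_|x X finX Xx IH XF].
  under eq_fun do rewrite set0I parity_set0.
  by rewrite parity_set0; exact: b2sum_eq0.
have [j _ Fjx] := XF x (or_introl erefl).
have -> : (fun i => parity ((x |` X) `&` F i)) =
          (fun i => parity (X `&` F i) (+) (true && `[< i = j >])).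
  apply/funext => i; rewrite setIUl; case: (pselect (i = j)) => [->|ij].
    rewrite asboolT // (setIidl (_ : [set x] `<=` F j)); last by move=> y ->.
    by rewrite parityU1 ?addbT //; [exact: finite_setIl | case].
  rewrite (asboolF ij) addbF (_ : [set x] `&` F i = set0) ?set0U //.
  by apply/seteqP; split => // y [-> Fix]; rewrite -(disjF _ _ ij).
rewrite parityU1 // -addbT; apply: (b2sum_eq_toggle true j); apply: IH.
by move=> y Xy; apply: XF; right.
Qed.

Section EuclideanSpace.
Context {R : realType} {n : nat}.
Local Notation V := 'rV[R]_n.

Lemma entry_le_mx_norm (v : V) i : `|v ord0 i| <= `|v|.
Proof.
have /mapP[j Hj ->] : `|v ord0 i| \in [seq `|v x.1 x.2| | x : 'I_1 * 'I_n].
  by apply/mapP; exists (ord0, i) => //=; rewrite mem_enum.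
by rewrite [leRHS]/Num.norm /= mx_normrE; apply/bigmax_geP; right; exists j.
Qed.

Lemma entry_le_eucl_norm (v : V) i : `|v ord0 i| <= eucl_norm v.
Proof.
rewrite /eucl_norm -sqrtr_sqr ler_sqrt; last by apply: sumr_ge0 => j _; exact: sqr_ge0.
by rewrite (bigD1 i) //= lerDl; apply: sumr_ge0 => j _; exact: sqr_ge0.
Qed.

Lemma mx_norm_le_eucl_norm (v : V) : `|v| <= eucl_norm v.
Proof.
rewrite [leLHS]/Num.norm /= mx_normrE; apply/bigmax_leP; split; first exact: sqrtr_ge0.
by move=> [i j] _ /=; rewrite (ord1 i); exact: entry_le_eucl_norm.
Qed.

Lemma eucl_norm_le_mx_norm (v : V) : eucl_norm v <= n.+1%:R * `|v|.
Proof.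
have c_ge0 : 0 <= n.+1%:R * `|v| by apply: mulr_ge0.
rewrite /eucl_norm -(ger0_norm c_ge0) -sqrtr_sqr ler_sqrt; last exact: sqr_ge0.
apply: (@le_trans _ _ (\sum_(i < n) `|v| ^+ 2)).
  apply: ler_sum => i _; rewrite -real_normK ?num_real //.
  by rewrite lerXn2r ?nnegrE ?entry_le_mx_norm.
rewrite sumr_const card_ord -mulr_natr -natr1.
have : 0 <= n%:R :> R by [].
have := normr_ge0 v; nra.
Qed.

Lemma diam_le (B : set V) r : 0 <= r ->
  (forall y z, B y -> B z -> eucl_norm (y - z) <= r) -> diam B <= r.
Proof.
move=> r_ge0 Br; rewrite /diam.
set S := [set d | _].
have [[d Sd]|S0] := pselect (S !=set0).
  apply: ge_sup; first by exists d.
  by move=> _ [a [b [Ba [Bb ->]]]]; exact: Br.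
by rewrite (_ : S = set0) ?sup0 //; apply/seteqP; split => // d Sd; apply: S0; exists d.
Qed.

Lemma diam_le_mx_ball (x : V) r (B : set V) : 0 <= r ->
  (forall y, B y -> `|x - y| <= r) -> diam B <= n.+1%:R * (2 * r).
Proof.
move=> r_ge0 Br; apply: diam_le => [|y z By Bz]; first by rewrite mulr_ge0 ?mulr_ge0.
apply: le_trans (eucl_norm_le_mx_norm _) _; rewrite ler_pM2l ?ltr0n //.
have -> : y - z = (x - z) - (x - y) by rewrite opprB [RHS]addrC addrA subrK.
by apply: le_trans (ler_normB _ _) _; have := Br _ By; have := Br _ Bz; lra.
Qed.

Lemma diam_set1 (x : V) : diam [set x] <= 0.
Proof.
rewrite -[leRHS](mulr0 n.+1%:R) -[X in _ * X](mulr0 2).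
by apply: (diam_le_mx_ball (x := x)) => // y ->; rewrite subrr normr0.
Qed.

Lemma in_Un_sub (A B : set V) : A `<=` B -> in_Un B -> in_Un A.
Proof. by move=> AB [M BM]; exists M => x /AB /BM. Qed.

Lemma in_UnU (A B : set V) : in_Un A -> in_Un B -> in_Un (A `|` B).
Proof.
move=> [M AM] [N BN]; exists (Num.max M N) => x [/AM|/BN] h;
  by rewrite le_max h ?orbT.
Qed.

Lemma in_Un0 : in_Un (@set0 V).
Proof. by exists 0. Qed.

Lemma in_Un1 (x : V) : in_Un [set x].
Proof. by exists (eucl_norm x) => y ->. Qed.

Lemma closure_mx_norm_lt {A : set V} {M : R} : (forall x, A x -> eucl_norm x <= M) ->
  forall x, closure A x -> `|x| < M + 1.
Proof.
move=> AM x /(_ _ (nbhsx_ballx x 1 ltr01)) [a [Aa]].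
rewrite -ball_normE /= => xa.
have := le_trans (mx_norm_le_eucl_norm a) (AM a Aa).
have := ler_normD (x - a) a; rewrite subrK; lra.
Qed.

Lemma in_Un_closure (A : set V) : in_Un A -> in_Un (closure A).
Proof.
move=> [M AM]; exists (n.+1%:R * (M + 1)) => x /(closure_mx_norm_lt AM) xM.
by apply: le_trans (eucl_norm_le_mx_norm x) _; rewrite ler_pM2l ?ltr0n ?ltW.
Qed.

Lemma compact_closure_Un (A : set V) : in_Un A -> compact (closure A).
Proof.
move=> [M AM]; apply: bounded_closed_compact; last exact: closed_closure.
exists (M + 1); split; first exact: num_real.
by move=> N MN x /(closure_mx_norm_lt AM) /lt_trans /(_ MN) /ltW.
Qed.

End EuclideanSpace.

Section B2Measure.
Variables (R : realType) (n : nat) (mu : set 'rV[R]_n -> bool).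
Hypothesis mu_measure : is_B2measure mu.
Local Notation V := 'rV[R]_n.

Lemma mu_set0 : mu set0 = false.
Proof.
have := @mu_measure (fun=> set0) (fun=> in_Un0) (fun _ _ _ => setI0 _).
rewrite bigcup0 // => /(_ in_Un0) /b2sum_eqP [fin _].
case: (mu set0) fin => // fin; exfalso; apply: infinite_nat.
by apply: sub_finite_set fin.
Qed.

Lemma mu_setU (A B : set V) : in_Un A -> in_Un B -> A `&` B = set0 ->
  mu (A `|` B) = mu A (+) mu B.
Proof.
move=> AUn BUn AB.
pose F (i : nat) : set V := if i == 0%N then A else if i == 1%N then B else set0.
have F_Un i : in_Un (F i) by move: i => [|[|i]] //; exact: in_Un0.
have F_disj i j : i <> j -> F i `&` F j = set0.
  by move: i j => [|[|i]] [|[|j]] //= _; rewrite ?setI0 ?set0I // setIC.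
have F_cup : \bigcup_i F i = A `|` B.
  apply/seteqP; split => [x [[|[|i]] _ //=]|x [Ax|Bx]];
    by [left | right | exists 0%N | exists 1%N].
have := @mu_measure F F_Un F_disj; rewrite F_cup => /(_ (in_UnU AUn BUn)).
move/b2sum_eq_unique; apply.
have := b2sum_eq_toggle (mu B) 1%N (b2sum_eq_toggle (mu A) 0%N (b2sum_eq0 setT)).
have asbool_eqn (i j : nat) : `[< i = j >] = (i == j) by apply/asboolP/eqP.
congr b2sum_eq; apply/funext => -[|[|i]];
  by rewrite /F !asbool_eqn /= ?andbT ?andbF ?addbF ?mu_set0.
Qed.

Lemma mu_setID (A B : set V) : in_Un A -> mu A = mu (A `&` B) (+) mu (A `\` B).
Proof.
move=> AUn; rewrite -{1}(setUIDK A B) mu_setU //.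
- exact: in_Un_sub (@subIsetl _ A B) AUn.
- by apply: in_Un_sub AUn => x [].
- by apply/seteqP; split => // x [[_ Bx] [_ /(_ Bx)]].
Qed.

Lemma dmu_set1 (x : V) a : dmu_is mu x a -> mu [set x] = a.
Proof.
case=> eps eps_gt0; apply; first exact: in_Un1; first by [].
exact: le_lt_trans (diam_set1 x) eps_gt0.
Qed.

Lemma dmu_setD1 (x : V) a : dmu_is mu x a -> exists2 eps : R, 0 < eps &
  forall B, in_Un B -> B x -> diam B < eps -> mu (B `\ x) = false.
Proof.
move=> dx; have mux := dmu_set1 dx; case: dx => eps eps_gt0 muB.
exists eps => // B BUn Bx dB; move: (mu_setID [set x] BUn).
rewrite setIidr => [|y -> //]; rewrite mux muB //.
by case: a {muB mux}; case: (mu _).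
Qed.

Definition isolating_ball (x : V) (r : R) : Prop :=
  0 < r /\ forall C, in_Un C -> C `<=` ball x r -> mu C = mu (C `&` [set x]).

Lemma dmu_isolating_ball (x : V) a : dmu_is mu x a -> exists r, isolating_ball x r.
Proof.
move=> /dmu_setD1 [eps eps_gt0 muD].
pose c : R := n.+1%:R; have c_gt0 : 0 < c by rewrite ltr0n.
exists (eps / (4 * c)); split => [|C CUn Cball]; first by rewrite divr_gt0 ?mulr_gt0.
have xC_small : diam (x |` C) < eps.
  apply: le_lt_trans (diam_le_mx_ball (x := x) (r := eps / (4 * c)) _ _) _.
  - by rewrite ltW ?divr_gt0 ?mulr_gt0.
  - move=> y [->|/Cball]; first by rewrite subrr normr0 ltW ?divr_gt0 ?mulr_gt0.
    by rewrite -ball_normE /= => /ltW.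
  - have -> : c * (2 * (eps / (4 * c))) = eps / 2 by field; rewrite gt_eqF.
    lra.
have := muD _ (in_UnU (in_Un1 x) CUn) (or_introl erefl) xC_small.
rewrite setDUl setDv set0U => muCx.
by rewrite (mu_setID [set x] CUn) muCx addbF.
Qed.

Definition atoms (C : set V) : set V := [set y | C y /\ mu [set y] = true].

Definition atomic (C : set V) : Prop :=
  finite_set (atoms C) /\ mu C = parity (atoms C).

Lemma atomic_sub1 (x : V) (C : set V) : C `<=` [set x] -> atomic C.
Proof.
case/subset_set1 => ->.
  rewrite /atomic (_ : atoms set0 = set0) ?mu_set0 ?parity_set0 //.
  by apply/seteqP; split => // y [].
rewrite /atomic; case mux: (mu [set x]).
  have -> : atoms [set x] = [set x].
    by apply/seteqP; split => [y []//|y ->]; split.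
  by rewrite parity_set1; split => //; exact: finite_set1.
have -> : atoms [set x] = set0.
  by apply/seteqP; split => // y [-> ]; rewrite mux.
by rewrite parity_set0; split => //; exact: finite_set0.
Qed.

Lemma atomicU (C D : set V) : in_Un C -> in_Un D -> C `&` D = set0 ->
  atomic C -> atomic D -> atomic (C `|` D).
Proof.
move=> CUn DUn CD [finC muC] [finD muD].
have atomsU : atoms (C `|` D) = atoms C `|` atoms D.
  apply/seteqP; split => [y [[Cy|Dy] my]|y [[Cy my]|[Dy my]]];
    by [left | right | split; [left|] | split; [right|]].
have atoms_disj : atoms C `&` atoms D = set0.
  by apply/seteqP; split => // y [[Cy _] [Dy _]]; rewrite -CD.
split; first by rewrite atomsU finite_setU.
by rewrite mu_setU // atomsU parityU // muC muD.
Qed.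

Lemma atomic_isolating_ball (x : V) r (C : set V) : isolating_ball x r ->
  in_Un C -> C `<=` ball x r -> atomic C.
Proof.
move=> [_ iso] CUn Cball.
have atomsE : atoms C = atoms (C `&` [set x]).
  apply/seteqP; split => y [Cy my]; split => //; last by case: Cy.
  split => //; case: (pselect (y = x)) => // yx; move: my.
  rewrite iso ?set1I ?memNset ?mu_set0 //; first exact: in_Un1.
  by move=> _ ->; exact: Cball.
have [finCx muCx] := atomic_sub1 (@subIsetr _ C [set x]).
by split; rewrite atomsE // iso.
Qed.

Lemma atomic_isolating_cover (r : V -> R) (s : seq V) :
  (forall x, x \in s -> isolating_ball x (r x)) ->
  forall C, in_Un C -> C `<=` \bigcup_(x in [set` s]) ball x (r x) -> atomic C.
Proof.
elim: s => [_ C _ Cs|x s IH iso C CUn Cs].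
  by apply: (atomic_sub1 (x := 0)) => y /Cs [].
rewrite -(setUIDK C (ball x (r x))); apply: atomicU.
- by apply: in_Un_sub CUn => y [].
- by apply: in_Un_sub CUn => y [].
- by apply/seteqP; split => // y [[_ b] [_ /(_ b)]].
- apply: atomic_isolating_ball (iso x (mem_head _ _)) _ _ => [|y []//].
  by apply: in_Un_sub CUn => y [].
apply: IH => [z zs||y [/Cs [z /= ]]].
- by apply: iso; rewrite inE zs orbT.
- by apply: in_Un_sub CUn => y [].
- by rewrite inE => /orP[/eqP-> /[swap] /[apply]|zs zy _]; last by exists z.
Qed.

Lemma atomic_subset_of_derivable_closure (A : set V) : in_Un A ->
  derivable_on mu (closure A) -> forall C, C `<=` A -> atomic C.
Proof.
move=> AUn dA.
have /choice [r iso] : forall x, exists r, closure A x -> isolating_ball x r.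
  move=> x; have [/dA [a /dmu_isolating_ball [r xr]]|nAx] := pselect (closure A x).
    by exists r => _.
  by exists 0 => /nAx.
have := compact_closure_Un AUn; rewrite compact_cover.
case/(_ V (closure A) (fun x => ball x (r x)) (fun x _ => ball_open _ _)).
  by move=> x Ax; exists x => //; apply: ballxx; case: (iso x Ax).
move=> D DA Dcover C CA.
apply: (atomic_isolating_cover (s := enum_fset D)).
- by move=> x xD; apply: iso; move: (DA x xD); rewrite in_setE.
- exact: in_Un_sub CA AUn.
- by move=> y /CA /subset_closure /Dcover [x xD yx]; exists x.
Qed.

Lemma atomicE (C : set V) : atomic C <-> b2sum_eq C (fun x => mu [set x]) (mu C).
Proof. by symmetry; exact: b2sum_eqP. Qed.

Lemma supp_dmu_finite (A : set V) : atomic A -> finite_set (supp_dmu mu A).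
Proof. by case=> finA _; apply: sub_finite_set finA => x [Ax /dmu_set1]. Qed.

Lemma atomic_partition (I : Type) (F : I -> set V) (A : set V) :
  (forall C, C `<=` A -> atomic C) -> is_partition F A ->
  b2sum_eq setT (fun i => mu (F i)) (mu A).
Proof.
move=> atA [_ disjF cupF]; have [finA ->] := atA A (@subset_refl _ A).
have FA i : F i `<=` A by rewrite -cupF => y Fy; exists i.
have := b2sum_eq_parity_partition disjF finA (_ : atoms A `<=` \bigcup_i F i).
rewrite cupF => /(_ (fun y => @proj1 _ _)); congr b2sum_eq; apply/funext => i.
have [_ ->] := atA _ (FA i); congr parity.
by apply/seteqP; split => [y [[_ my] Fy]|y [Fy my]]; do ?split => //; exact: FA Fy.
Qed.

End B2Measure.

Theorem corollary5p14 (R : realType) (n : nat) (hn : (0 < n)%N)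
  (mu : set 'rV[R]_n -> bool) (hmu : is_B2measure mu) :
  (forall A : set 'rV[R]_n, in_Un A -> derivable_on mu (closure A) ->
     [/\ finite_set (supp_dmu mu A),
         (forall x, A x -> exists2 eps : R, 0 < eps &
            forall B, in_Un B -> B x -> diam B < eps ->
              mu (B `\ x) = false),
         b2sum_eq A (fun x => mu [set x]) (mu A) &
         (forall (I : Type) (F : I -> set 'rV[R]_n),
            is_partition F A ->
            b2sum_eq setT (fun i => mu (F i)) (mu A))])
  /\
  ((forall B : set 'rV[R]_n, in_Un B -> derivable_on mu B) ->
     locally_finite [set x | dmu_is mu x true]).
Proof.
split => [A AUn dA | der B BUn].
  have atA := atomic_subset_of_derivable_closure hmu AUn dA.
  split.
  - exact: supp_dmu_finite (atA A (@subset_refl _ A)).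
  - by move=> x /subset_closure /dA [a /(dmu_setD1 hmu)].
  - exact/atomicE/atA.
  - by move=> I F; apply: atomic_partition.
have atB := atomic_subset_of_derivable_closure hmu BUn (der _ (in_Un_closure BUn)).
exact: supp_dmu_finite (atB B (@subset_refl _ B)).
Qed.
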